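(* Let $T=(V,E)$ be a finite undirected tree, let $\mathcal{O}$ be a nonempty proper subset of $V$ (the observers), and consider the infection model described in the context, with unknown source $s\in V$. Then, with probability one, $s$ does not belong to any non-feasible equivalence class $r\in[\mathcal{O}]$.
   Context: Infection model: an infection starts at time $0$ at a single node $s\in V$ (the source). For each edge $e\in E$ there is a nonnegative random delay $\tau_e$ with a continuous (atomless) distribution, and the $\tau_e$, $e\in E$, are independent. For $u,v\in V$, $[u,v]$ denotes the set of edges (or vertices, depending on context) of the unique path in $T$ between $u$ and $v$. The infection time of $v\in V$ is $\tau_v:=\sum_{e\in[s,v]}\tau_e$. Only the $\tau_o$, $o\in\mathcal{O}$, are observed. Equivalence classes: for $u,v\in V\setminus\mathcal{O}$, $u\equiv v$ iff $[u,v]\cap\mathcal{O}=\emptyset$ (vertex sets). $[\mathcal{O}]$ is the set of equivalence classes. For $r\in[\mathcal{O}]$, its boundary $\partial r$ is the set of observers adjacent to some node of $r$. For $o\in\mathcal{O}$ and a class $r$, $V_{o;r}:=\{v\in V: [o,v]\cap r=\emptyset\}$ (vertex sets), and $T_{o;r}$ is the subtree of $T$ induced on $V_{o;r}$, rooted at $o$. A class $r\in[\mathcal{O}]$ is feasible (for a given realization of the observed times) if for every $o\in\partial r$ and every $o_1,o_2\in V_{o;r}\cap\mathcal{O}$ with $o_1$ an ancestor of $o_2$ in $T_{o;r}$, one has $\tau_{o_1}\le\tau_{o_2}$. *)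

From HB Require Import structures.
From mathcomp Require Import all_boot all_order all_algebra.
From mathcomp Require Import all_classical all_reals all_analysis.
Set Implicit Arguments. Unset Strict Implicit. Unset Printing Implicit Defensive.
Import Order.TTheory GRing.Theory Num.Theory.
Local Open Scope ring_scope.

Section Graph.
Variables (V : finType) (adj : rel V).

Definition simple_graph := symmetric adj /\ irreflexive adj.

Definition upath (u v : V) (p : seq V) : Prop :=
  [/\ path adj u p, last u p = v & uniq (u :: p)].

Definition upath_in (W : {set V}) (u v : V) (p : seq V) : Prop :=
  upath u v p /\ all (fun x => x \in W) (u :: p).

Definition is_tree : Prop :=
  simple_graph /\ forall u v : V, exists! p, upath u v p.

Definition edgeb (A : {set V}) : bool :=
  [exists u, exists v, adj u v && (A == [set u; v])].
Definition edge := {A : {set V} | edgeb A}.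

Definition pathV (u v : V) : {set V} :=
  [set w | `[< exists p, upath u v p /\ w \in u :: p >]].

Definition onpathE (u v : V) (A : {set V}) : Prop :=
  exists p, upath u v p /\
    exists i, (i < size p)%N /\ A = [set nth u (u :: p) i; nth u (u :: p) i.+1].

Definition obs_equiv (O : {set V}) (u v : V) : bool :=
  [&& u \notin O, v \notin O & [disjoint pathV u v & O]].

Definition is_class (O : {set V}) (r : {set V}) : Prop :=
  exists2 u, u \notin O & r = [set v | obs_equiv O u v].

Definition boundary (O r : {set V}) : {set V} :=
  [set o in O | [exists x in r, adj o x]].

Definition Vor (o : V) (r : {set V}) : {set V} :=
  [set v | [disjoint pathV o v & r]].

Definition ancestor_in (W : {set V}) (o o1 o2 : V) : Prop :=
  exists p, upath_in W o o2 p /\ o1 \in o :: p.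

End Graph.

Section Infection.
Variables (V : finType) (adj : rel V) (R : realType) (Omega : Type).
Variable (tau : edge adj -> Omega -> R).

Definition inf_time (s v : V) (w : Omega) : R :=
  \sum_(A : edge adj | `[< onpathE adj s v (val A) >]) tau A w.

Definition feasible (O : {set V}) (s : V) (r : {set V}) (w : Omega) : Prop :=
  forall o, o \in boundary adj O r ->
  forall o1 o2, o1 \in Vor adj o r :&: O -> o2 \in Vor adj o r :&: O ->
    ancestor_in adj (Vor adj o r) o o1 o2 ->
    inf_time s o1 w <= inf_time s o2 w.
End Infection.

Section Prob.
Local Open Scope classical_set_scope.
Local Open Scope ereal_scope.
Definition mutually_independent (d : measure_display) (Omega : measurableType d)
  (R : realType) (P : probability Omega R) (I : finType) (X : I -> Omega -> R) : Prop :=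
  forall (J : {set I}) (B : I -> set R), (forall i, measurable (B i)) ->
    P (\bigcap_(i in [set i | i \in J]) (X i @^-1` B i)) =
    \prod_(i in J) P (X i @^-1` B i).
End Prob.

From HB Require Import structures.
From mathcomp Require Import all_boot all_order all_algebra.
From mathcomp Require Import all_classical all_reals all_analysis.
Import Order.TTheory GRing.Theory Num.Theory.
Local Open Scope ring_scope.

(* Delays are nonnegative, so infection times can only grow along the path
   leaving the source.  If the source lies in the class r, then r is connected
   and every path of T_{o;r} starting at its root o extends the path from s
   through r to the neighbour o; hence an ancestor in T_{o;r} lies on the path
   from s to its descendant and is infected no later. *)

Lemma disjoint_setUl (T : finType) (A B C : {set T}) :
  [disjoint A :|: B & C] = [disjoint A & C] && [disjoint B & C].
Proof. by rewrite !finset.disjoints_subset finset.subUset. Qed.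

Section TreePaths.
Local Set Implicit Arguments.
Local Unset Strict Implicit.
Variables (V : finType) (adj : rel V).

Lemma upath_cat a b p c d q :
  upath adj a b p -> upath adj c d q -> adj b c ->
  [disjoint a :: p & c :: q] -> upath adj a d (p ++ c :: q).
Proof.
move=> [pP pL pU] [qP qL qU] bc pq; split.
- by rewrite cat_path pP pL /= bc qP.
- by rewrite last_cat.
- by rewrite -cat_cons cat_uniq pU qU -disjoint_has disjoint_sym pq.
Qed.

Hypothesis tree : is_tree adj.

Lemma adj_sym : symmetric adj.
Proof. by case: tree => [[]]. Qed.

Lemma upath_exists a b : exists p, upath adj a b p.
Proof. by case: tree => _ /(_ a b) [p []]; exists p. Qed.

Lemma upath_unique a b p q : upath adj a b p -> upath adj a b q -> p = q.
Proof. by case: tree => _ /(_ a b) [p0 [_ eq_p0]] /eq_p0 <- /eq_p0. Qed.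

Lemma pathV_upath a b p w :
  upath adj a b p -> (w \in pathV adj a b) = (w \in a :: p).
Proof.
move=> abp; rewrite inE; apply/asboolP/idP => [[q [abq]]|]; last by exists p.
by rewrite (upath_unique abq abp).
Qed.

Lemma pathV_last a b : b \in pathV adj a b.
Proof.
have [p abp] := upath_exists a b.
by rewrite (pathV_upath _ abp); case: abp => _ <- _; apply: mem_last.
Qed.

Lemma pathV_walk a p :
  path adj a p -> {subset pathV adj a (last a p) <= a :: p}.
Proof.
move=> ap w; case: (shortenP ap) => q aq uq sub_qp.
rewrite (pathV_upath _ (And3 aq erefl uq)) !inE.
by case/orP => [-> // | /sub_qp ->]; rewrite orbT.
Qed.

Lemma upath_rev a b p : upath adj a b p -> upath adj b a (rev (belast a p)).
Proof.
move=> [ap <- uap]; have rev_ap : last a p :: rev (belast a p) = rev (a :: p).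
  by rewrite [a :: p]lastI rev_rcons.
split.
- by rewrite rev_path; apply: sub_path ap => y z; rewrite /= adj_sym.
- by rewrite -[last _ _](last_cons a) rev_ap rev_cons last_rcons.
- by rewrite rev_ap rev_uniq.
Qed.

Lemma pathVC a b : pathV adj a b = pathV adj b a.
Proof.
have sub x y : {subset pathV adj x y <= pathV adj y x}.
  have [p xyp] := upath_exists x y; move=> w.
  rewrite (pathV_upath _ xyp) (pathV_upath _ (upath_rev xyp)).
  by case: xyp => _ <- _; rewrite -mem_rev [x :: p]lastI rev_rcons.
by apply/setP => w; apply/idP/idP; apply: sub.
Qed.

Lemma pathV_split a b c : pathV adj a c \subset pathV adj a b :|: pathV adj b c.
Proof.
have [p abp] := upath_exists a b; have [q bcq] := upath_exists b c.
have [[ap pL _] [bq qL _]] := (abp, bcq).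
have apq : path adj a (p ++ q) by rewrite cat_path ap pL bq.
have := pathV_walk apq; rewrite last_cat pL qL => walk_pq.
apply/fintype.subsetP => w /walk_pq.
rewrite finset.in_setU (pathV_upath _ abp) (pathV_upath _ bcq).
rewrite -cat_cons mem_cat.
by case/orP => [-> // | wq]; rewrite (in_cons b) wq !orbT.
Qed.

Lemma pathV_prefix a b w :
  w \in pathV adj a b -> pathV adj a w \subset pathV adj a b.
Proof.
have [p abp] := upath_exists a b; rewrite (pathV_upath _ abp) => w_ap.
move: abp; case/splitPl: w_ap => p1 p2 <- abp.
have ap1 : path adj a p1 by case: abp; rewrite cat_path => /andP [].
apply/fintype.subsetP => z /(pathV_walk ap1) z_p1.
by rewrite (pathV_upath _ abp) -cat_cons mem_cat z_p1.
Qed.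

Lemma onpathE_prefix s u v A :
  u \in pathV adj s v -> onpathE adj s u A -> onpathE adj s v A.
Proof.
have [p svp] := upath_exists s v; rewrite (pathV_upath _ svp) => u_sp.
move: svp; case/splitPl: u_sp => p1 p2 <- svp.
have sup1 : upath adj s (last s p1) p1.
  by case: svp; rewrite cat_path -cat_cons cat_uniq => /andP [? _] _ /and3P [].
case=> q [suq [i [ltiq ->]]]; rewrite (upath_unique suq sup1) in ltiq *.
exists (p1 ++ p2); split; first by [].
exists i; split; first by rewrite size_cat ltn_addr.
by rewrite -cat_cons !nth_cat /= !ltnS ltiq (ltnW ltiq).
Qed.

Variable O : {set V}.

Lemma class_pathV_sub r x y :
  is_class adj O r -> x \in r -> y \in r -> pathV adj x y \subset r.
Proof.
move=> [u _ ->]; rewrite !inE => /and3P [uO xO ux] /and3P [_ yO uy].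
have xy_O : [disjoint pathV adj x y & O].
  apply: disjointWl (pathV_split x u y) _.
  by rewrite disjoint_setUl pathVC ux uy.
apply/fintype.subsetP => v xy_v.
rewrite inE /obs_equiv uO (disjointFr xy_O xy_v) /=.
apply: disjointWl (pathV_split u x v) _.
by rewrite disjoint_setUl ux (disjointWl (pathV_prefix xy_v) xy_O).
Qed.

Lemma Vor_notin o r v : v \in Vor adj o r -> v \notin r.
Proof. by rewrite inE => /disjointFr/(_ (pathV_last o v)) ->. Qed.

Lemma ancestor_on_source_path r s x o o1 o2 :
  is_class adj O r -> s \in r -> x \in r -> adj o x ->
  ancestor_in adj (Vor adj o r) o o1 o2 -> o1 \in pathV adj s o2.
Proof.
move=> r_cl sr xr ox [p [[op Vor_p] o1p]].
have [q sxq] := upath_exists s x.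
have sq_r : {subset s :: q <= r}.
  move=> v; rewrite -(pathV_upath _ sxq).
  exact/fintype.subsetP/class_pathV_sub.
have disj : [disjoint s :: q & o :: p].
  apply/pred0P => v /=; apply/negbTE/andP => -[/sq_r vr vp].
  by move/allP: Vor_p => /(_ v vp)/Vor_notin; rewrite vr.
have xo : adj x o by rewrite adj_sym.
rewrite (pathV_upath _ (upath_cat sxq op xo disj)).
by rewrite -cat_cons mem_cat o1p orbT.
Qed.

End TreePaths.

Section InfectionTimes.
Local Set Implicit Arguments.
Local Unset Strict Implicit.
Variables (V : finType) (adj : rel V) (R : realType) (Omega : Type).
Variable tau : edge adj -> Omega -> R.
Hypotheses (tree : is_tree adj) (tau_ge0 : forall A w, 0 <= tau A w).

Lemma inf_time_le_pathV s u v w :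
  u \in pathV adj s v -> inf_time tau s u w <= inf_time tau s v w.
Proof.
move=> suv; rewrite /inf_time [leLHS]big_mkcond [leRHS]big_mkcond /=.
apply: ler_sum => A _; have tauA_ge0 := tau_ge0 A w.
case: asboolP => [on_u | _]; case: asboolP => [on_v | off_v] //.
by case: off_v; exact: (onpathE_prefix tree suv on_u).
Qed.

Lemma feasible_source_class O s r w :
  is_class adj O r -> s \in r -> feasible tau O s r w.
Proof.
move=> r_cl sr o; rewrite inE => /andP [_ /existsP [x /andP [xr ox]]].
move=> o1 o2 _ _ anc; apply: inf_time_le_pathV.
exact: (ancestor_on_source_path tree r_cl sr xr ox anc).
Qed.

End InfectionTimes.

Local Open Scope classical_set_scope.

Theorem lemma1 (V : finType) (adj : rel V) (O : {set V})
  (R : realType) (d : measure_display) (Omega : measurableType d)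
  (P : probability Omega R) (tau : edge adj -> Omega -> R) (s : V) :
  is_tree adj ->
  (O != finset.set0) -> (O != [set: V])%SET ->
  (forall A, measurable_fun setT (tau A)) ->
  (forall A w, 0 <= tau A w) ->
  (forall A (x : R), P (tau A @^-1` [set x]) = 0%E) ->
  mutually_independent P tau ->
  {ae P, forall w, forall r, is_class adj O r -> s \in r ->
     feasible tau O s r w}.
Proof.
move=> tree _ _ _ tau_ge0 _ _.
apply: aeW => w r; exact: (feasible_source_class tree tau_ge0).
Qed.
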